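(* Let $a,b\in\mathbb{R}$, $\lambda\in\mathbb{C}$, and $n,k\in\mathbb{N}_0$. Then $$y_{3}(n,k;\lambda;a,b)=\sum_{j=0}^{k}\sum_{m=0}^{n}\binom{n}{m}a^{m}b^{n-m}\,y_{1}(m,j;\lambda)\,S_{2}(n-m,k-j).$$
   Context: For $a,b\in\mathbb{R}$, $\lambda\in\mathbb{C}$ and $k\in\mathbb{N}_0$: the numbers $y_3(n,k;\lambda;a,b)$ are defined by $\frac{e^{bkt}}{k!}(\lambda e^{(a-b)t}+1)^{k}=\sum_{n\ge0}y_{3}(n,k;\lambda;a,b)\frac{t^{n}}{n!}$; the numbers $y_1(n,k;\lambda)$ are defined by $\frac{1}{k!}(\lambda e^{t}+1)^{k}=\sum_{n\ge0}y_{1}(n,k;\lambda)\frac{t^{n}}{n!}$; and $S_2(n,k)$ denotes the Stirling numbers of the second kind, defined by $\frac{(e^{t}-1)^{k}}{k!}=\sum_{n\ge0}S_2(n,k)\frac{t^{n}}{n!}$. Convention: $0^0=1$. *)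

From HB Require Import structures.
From mathcomp Require Import all_boot all_order all_algebra.
From mathcomp Require Import complex.
From mathcomp Require Import reals.
Set Implicit Arguments. Unset Strict Implicit. Unset Printing Implicit Defensive.
Import Order.TTheory GRing.Theory Num.Theory.
Local Open Scope ring_scope.

(** Formal power series in t with coefficients in K: the sequence of
    coefficients of t^n (ordinary coefficients). *)
Definition fps (K : Type) := nat -> K.

Section FPS.
Variable K : fieldType.

Definition fps_one : fps K := fun n => (n == 0%N)%:R.
Definition fps_add (f g : fps K) : fps K := fun n => f n + g n.
Definition fps_scale (c : K) (f : fps K) : fps K := fun n => c * f n.
Definition fps_mul (f g : fps K) : fps K :=
  fun n => \sum_(i < n.+1) f i * g (n - i)%N.
Definition fps_pow (f : fps K) (k : nat) : fps K := iter k (fps_mul f) fps_one.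
Definition fps_exp (c : K) : fps K := fun n => c ^+ n / (n`!)%:R.
Definition egf_coef (f : fps K) (n : nat) : K := (n`!)%:R * f n.

End FPS.

Section Numbers.
Variable R : realType.
Local Notation C := (R[i]).

(** e^{bkt}/k! (lambda e^{(a-b)t} + 1)^k = sum_n y3(n,k;lambda;a,b) t^n/n! *)
Definition y3 (n k : nat) (lam : C) (a b : R) : C :=
  egf_coef
    (fps_scale (k`!%:R)^-1
       (fps_mul (fps_exp ((b * k%:R)%:C%C))
                (fps_pow (fps_add (fps_scale lam (fps_exp ((a - b)%:C%C)))
                                  (fps_one C)) k))) n.

(** (lambda e^t + 1)^k / k! = sum_n y1(n,k;lambda) t^n/n! *)
Definition y1 (n k : nat) (lam : C) : C :=
  egf_coef
    (fps_scale (k`!%:R)^-1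
       (fps_pow (fps_add (fps_scale lam (fps_exp 1)) (fps_one C)) k)) n.

(** (e^t - 1)^k / k! = sum_n S2(n,k) t^n/n! *)
Definition S2 (n k : nat) : C :=
  egf_coef
    (fps_scale (k`!%:R)^-1
       (fps_pow (fps_add (fps_exp 1) (fps_scale (-1) (fps_one C))) k)) n.

End Numbers.

From HB Require Import structures.
From mathcomp Require Import all_boot all_order all_algebra.
From mathcomp Require Import complex.
From mathcomp Require Import reals.
From mathcomp Require Import ring.
Import Order.TTheory GRing.Theory Num.Theory.
Local Open Scope ring_scope.
Set Implicit Arguments. Unset Strict Implicit.

(* Truncating every exponential series below degree N > n turns the generating
   functions into polynomials that agree with the series on the first N
   coefficients, and this agreement is compatible with sums, products and powers.
   Modulo t^N, e^{bkt} (lam e^{(a-b)t} + 1)^k = (lam e^{at} + e^{bt})^k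
   = ((lam e^{at} + 1) + (e^{bt} - 1))^k; in the binomial expansion of the last
   power the two factors are the generating functions of y1 and S2 with t
   dilated by a and b, and the coefficient of t^n is the double sum. *)

Lemma coef_comp_scaleX (K : comNzRingType) (p : {poly K}) (a : K) i :
  (p \Po (a *: 'X))`_i = a ^+ i * p`_i.
Proof.
rewrite comp_polyE.
under eq_bigr do rewrite exprZn scalerA.
rewrite -(poly_def _ (fun j => p`_j * a ^+ j)) coef_poly mulrC.
by case: ltnP => // le_p_i; rewrite nth_default ?mulr0.
Qed.

Lemma coef_mul_comp_scaleX (K : comNzRingType) (p q : {poly K}) (a b : K) n :
  ((p \Po (a *: 'X)) * (q \Po (b *: 'X)))`_n
  = \sum_(m < n.+1) a ^+ m * b ^+ (n - m) * (p`_m * q`_(n - m)).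
Proof. by rewrite coefM; apply: eq_bigr => m _; rewrite !coef_comp_scaleX mulrACA. Qed.

Section Factorials.
Variable K : numFieldType.

Lemma natr_fact_neq0 n : (n`!)%:R != 0 :> K.
Proof. by rewrite pnatr_eq0 -lt0n fact_gt0. Qed.

Lemma natr_bin_fact n m : (m <= n)%N ->
  ('C(n, m))%:R = (n`!)%:R / ((m`!)%:R * ((n - m)`!)%:R) :> K.
Proof.
move=> le_m_n; rewrite -(bin_fact le_m_n) !natrM mulfK //.
by rewrite mulf_neq0 ?natr_fact_neq0.
Qed.

Lemma sum_exp_coefs (c d : K) i :
  \sum_(j < i.+1) c ^+ j / (j`!)%:R * (d ^+ (i - j) / ((i - j)`!)%:R)
  = (c + d) ^+ i / (i`!)%:R.
Proof.
rewrite addrC exprDn mulr_suml; apply: eq_bigr => j _.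
have le_j_i : (j <= i)%N by rewrite -ltnS.
rewrite -[_ *+ 'C(i, j)]mulr_natr (natr_bin_fact le_j_i); field.
by rewrite !natr_fact_neq0.
Qed.

End Factorials.

Section Truncation.
Variables (K : numFieldType) (N : nat).

Definition approx (f : fps K) (p : {poly K}) := forall i, (i < N)%N -> f i = p`_i.

Definition coefs (p : {poly K}) : fps K := fun i => p`_i.

Lemma approx_coefs p : approx (coefs p) p.
Proof. by []. Qed.

Lemma approx_coefs_sym p q : approx (coefs p) q -> approx (coefs q) p.
Proof. by move=> hpq i lt_iN; apply/esym/hpq. Qed.

Lemma approx_trans f p q : approx f p -> approx (coefs p) q -> approx f q.
Proof. by move=> hfp hpq i lt_iN; rewrite hfp //; apply: hpq. Qed.

Lemma approx_one : approx (fps_one K) 1.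
Proof. by move=> i _; rewrite coef1. Qed.

Lemma approx_add f g p q :
  approx f p -> approx g q -> approx (fps_add f g) (p + q).
Proof. by move=> hf hg i lt_iN; rewrite coefD /fps_add hf ?hg. Qed.

Lemma approx_scale c f p : approx f p -> approx (fps_scale c f) (c *: p).
Proof. by move=> hf i lt_iN; rewrite coefZ /fps_scale hf. Qed.

Lemma approx_mul f g p q :
  approx f p -> approx g q -> approx (fps_mul f g) (p * q).
Proof.
move=> hf hg i lt_iN; rewrite coefM; apply: eq_bigr => j _.
rewrite hf ?hg //; apply: leq_ltn_trans lt_iN; first exact: leq_subr.
by rewrite -ltnS.
Qed.

Lemma approx_pow f p k : approx f p -> approx (fps_pow f k) (p ^+ k).
Proof.
move=> hf; elim: k => [|k IHk]; first exact: approx_one.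
by rewrite exprS; apply: approx_mul.
Qed.

Lemma approx_coefsD p p' q q' :
  approx (coefs p) p' -> approx (coefs q) q' -> approx (coefs (p + q)) (p' + q').
Proof. by move=> hp hq i lt_iN; rewrite /coefs coefD; apply: approx_add. Qed.

Lemma approx_coefsZ c p q : approx (coefs p) q -> approx (coefs (c *: p)) (c *: q).
Proof. by move=> hpq i lt_iN; rewrite /coefs coefZ; apply: approx_scale. Qed.

Lemma approx_coefsM p p' q q' :
  approx (coefs p) p' -> approx (coefs q) q' -> approx (coefs (p * q)) (p' * q').
Proof. by move=> hp hq i lt_iN; rewrite /coefs coefM; apply: approx_mul. Qed.

Lemma approx_coefsX p q k : approx (coefs p) q -> approx (coefs (p ^+ k)) (q ^+ k).
Proof.
move=> hpq; elim: k => [|k IHk]; first by rewrite !expr0.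
by rewrite !exprS; apply: approx_coefsM.
Qed.

Definition trunc_exp (c : K) : {poly K} := \poly_(i < N) (c ^+ i / (i`!)%:R).

Lemma approx_exp c : approx (fps_exp c) (trunc_exp c).
Proof. by move=> i lt_iN; rewrite coef_poly lt_iN. Qed.

Lemma trunc_exp_mul c d :
  approx (coefs (trunc_exp c * trunc_exp d)) (trunc_exp (c + d)).
Proof.
move=> i lt_iN; rewrite /coefs -(approx_exp (c + d) lt_iN) /fps_exp -sum_exp_coefs.
exact: esym (approx_mul (approx_exp c) (approx_exp d) lt_iN).
Qed.

Lemma trunc_exp0 : (0 < N)%N -> trunc_exp 0 = 1.
Proof.
move=> N_gt0; apply/polyP => i; rewrite coef_poly coef1 expr0n.
by case: i => [|i] /=; rewrite ?N_gt0 ?fact0 ?divr1 // mul0r if_same.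
Qed.

Lemma trunc_exp_pow c k : (0 < N)%N ->
  approx (coefs (trunc_exp c ^+ k)) (trunc_exp (c *+ k)).
Proof.
move=> N_gt0; elim: k => [|k IHk]; first by rewrite expr0 mulr0n trunc_exp0.
rewrite exprS mulrS; apply: approx_trans (trunc_exp_mul c (c *+ k)).
exact: approx_coefsM (approx_coefs _) IHk.
Qed.

Lemma trunc_exp_comp_scaleX c a : trunc_exp c \Po (a *: 'X) = trunc_exp (a * c).
Proof.
apply/polyP => i; rewrite coef_comp_scaleX !coef_poly.
by case: ifP => _; rewrite ?mulr0 // exprMn mulrA.
Qed.

Lemma trunc_exp_shift_pow (lam c d : K) k : (0 < N)%N ->
  approx (coefs (trunc_exp (d *+ k) * (lam *: trunc_exp (c - d) + 1) ^+ k))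
         ((lam *: trunc_exp c + trunc_exp d) ^+ k).
Proof.
move=> N_gt0.
apply: approx_trans
  (approx_coefsM (approx_coefs_sym (trunc_exp_pow d k N_gt0)) (approx_coefs _)) _.
rewrite -exprMn; apply: approx_coefsX.
rewrite mulrDr mulr1 -scalerAr; apply: approx_coefsD (approx_coefs _).
apply: approx_coefsZ.
by have := trunc_exp_mul d (c - d); rewrite addrCA subrr addr0.
Qed.

End Truncation.

Arguments approx_one {K N}.

Section Numbers.
Variable R : realType.
Local Notation C := R[i].

Lemma y1E N m j (lam : C) : (m < N)%N ->
  y1 m j lam = (m`!)%:R / (j`!)%:R * ((lam *: trunc_exp N 1 + 1) ^+ j)`_m.
Proof.
move=> lt_mN; rewrite /y1 /egf_coef -mulrA -coefZ.
congr (_ * _); apply: (approx_scale _ _ lt_mN).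
exact: approx_pow _ (approx_add (approx_scale _ (approx_exp _)) approx_one).
Qed.

Lemma S2E N m j : (m < N)%N ->
  S2 R m j = (m`!)%:R / (j`!)%:R * ((trunc_exp N 1 - 1) ^+ j)`_m.
Proof.
move=> lt_mN; rewrite /S2 /egf_coef -[in RHS]scaleN1r -mulrA -coefZ.
congr (_ * _); apply: (approx_scale _ _ lt_mN).
exact: approx_pow _ (approx_add (approx_exp _) (approx_scale _ approx_one)).
Qed.

Lemma y3E N n k (lam : C) (a b : R) : (n < N)%N ->
  y3 n k lam a b = (n`!)%:R / (k`!)%:R *
    (((trunc_exp N 1 - 1) \Po (b%:C%C *: 'X)
      + ((lam *: trunc_exp N 1 + 1) \Po (a%:C%C *: 'X))) ^+ k)`_n.
Proof.
move=> lt_nN; have N_gt0 : (0 < N)%N by apply: leq_ltn_trans lt_nN.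
rewrite /y3 /egf_coef -mulrA; congr (_ * (_ * _)).
have -> : (b * k%:R)%:C%C = b%:C%C *+ k :> C by rewrite rmorphM rmorph_nat mulr_natr.
have -> : (a - b)%:C%C = a%:C%C - b%:C%C :> C by rewrite rmorphB.
rewrite (approx_trans (approx_mul (approx_exp _) (approx_pow _
  (approx_add (approx_scale _ (approx_exp _)) approx_one)))
  (trunc_exp_shift_pow _ _ _ _ N_gt0) lt_nN).
rewrite comp_polyB comp_polyD comp_polyZ !trunc_exp_comp_scaleX !mulr1 !rmorph1.
by rewrite addrACA addNr addr0 addrC.
Qed.

End Numbers.

Theorem mainTheorem2 (R : realType) (a b : R) (lam : R[i]) (n k : nat) :
  y3 n k lam a b =
  \sum_(0 <= j < k.+1) \sum_(0 <= m < n.+1)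
     ('C(n, m))%:R * (a ^+ m)%:C%C * (b ^+ (n - m))%:C%C
       * y1 m j lam * S2 R (n - m) (k - j).
Proof.
rewrite (y3E (N := n.+1)) // exprDn coef_sum mulr_sumr big_mkord.
apply: eq_bigr => j _; have le_jk : (j <= k)%N by rewrite -ltnS.
rewrite coefMn -!(rmorphXn (comp_poly _)) [(_ \Po _) * _]mulrC coef_mul_comp_scaleX.
rewrite -sumrMnl mulr_sumr big_mkord; apply: eq_bigr => m _.
have le_mn : (m <= n)%N by rewrite -ltnS.
rewrite (y1E (N := n.+1)) // (@S2E R n.+1) ?ltnS ?leq_subr // !rmorphXn.
rewrite -[_ *+ 'C(k, j)]mulr_natr (natr_bin_fact _ le_jk) (natr_bin_fact _ le_mn); field.
by rewrite !natr_fact_neq0.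
Qed.
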